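(* Let $(\mathfrak{g},V,\Theta)$ be a Lie-Leibniz triple, with associated graded Lie algebra $T_{\leq-1}$ and differential $\partial=(\partial_{-i}:T_{-i-1}\to T_{-i})_{i\geq1}$. For each $i\geq1$ let $R_{-i}$ be the cyclic $\mathfrak{g}$-submodule of $\mathrm{Hom}(T_{-i-1},T_{-i})$ generated by $\partial_{-i}$. Then for every $i\geq1$ there exists a surjective morphism of $\mathfrak{g}$-modules $\mu_{-i}:R_\Theta\to R_{-i}$ such that $\partial_{-i}=\mu_{-i}(\Theta)$.
   Context: A (left) Leibniz algebra is a vector space $V$ with bilinear $\circ$ satisfying $x\circ(y\circ z)=(x\circ y)\circ z+y\circ(x\circ z)$; $\{x,y\}=\frac12(x\circ y+y\circ x)$. A Lie-Leibniz triple $(\mathfrak{g},V,\Theta)$ consists of a Lie algebra $\mathfrak{g}$, a $\mathfrak{g}$-module $V$ (action $a\cdot x$) with a Leibniz product $\circ$, and a linear map $\Theta:V\to\mathfrak{g}$ with $x\circ y=\Theta(x)\cdot y$ and $\Theta(x\circ y)=[\Theta(x),\Theta(y)]$. $\mathfrak{g}$ acts on $\mathrm{Hom}(V,\mathfrak{g})$ by $(a\cdot\Xi)(x)=[a,\Xi(x)]-\Xi(a\cdot x)$, and $R_\Theta$ is the cyclic $\mathfrak{g}$-submodule generated by $\Theta$ (spanned by $\Theta$ and all $a_1\cdot(a_2\cdot(\cdots(a_m\cdot\Theta)))$). Similarly $\mathfrak g$ acts on $\mathrm{Hom}(T_{-i-1},T_{-i})$ by $(a\cdot f)(x)=a\cdot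 f(x)-f(a\cdot x)$. Associated graded Lie algebra: let $K$ be the largest $\mathfrak{g}$-submodule of $S^2(V)$ in the kernel of $x\odot y\mapsto\{x,y\}$; $F$ the free graded Lie algebra on $V[1]$ (degree $-1$), $F_{-2}\cong S^2(V)$, $\mathfrak g$ acting by derivations; $K_{-2}=K$, $K_{-i}=\sum_{j=1}^{i-2}[F_{-j},K_{-i+j}]$ ($i\geq3$); $T_{\leq-1}=F/K_\bullet$, $T_{-1}=V[1]$, with induced bracket $\llbracket\,.\,,.\,\rrbracket$ and $\mathfrak{g}$-action. With $\mathfrak{h}=\mathrm{Im}\Theta$, $\partial$ is the unique family of $\mathfrak{h}$-equivariant linear maps $\partial_{-i}:T_{-i-1}\to T_{-i}$ with $\partial\llbracket u,v\rrbracket=2\{u,v\}$, $\partial\llbracket u,x\rrbracket=\Theta(u)\cdot x-\llbracket u,\partial x\rrbracket$, $\partial\llbracket x,y\rrbracket=\llbracket\partial x,y\rrbracket+(-1)^{|x|}\llbracket x,\partial y\rrbracket$ for $u,v\in T_{-1}$, $x,y\in T_{\leq-2}$. *)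

From HB Require Import structures.
From mathcomp Require Import all_boot all_order all_algebra.
Set Implicit Arguments. Unset Strict Implicit. Unset Printing Implicit Defensive.
Import GRing.Theory.
Local Open Scope ring_scope.

Section LLDefs.
Variable k : fieldType.

Definition bilin (U W X : lmodType k) (f : U -> W -> X) : Prop :=
  (forall u, linear (f u)) /\ (forall w, linear (fun u => f u w)).

Definition is_lie (g : lmodType k) (brg : g -> g -> g) : Prop :=
  [/\ bilin brg, (forall a, brg a a = 0) &
      (forall a b c, brg a (brg b c) = brg (brg a b) c + brg b (brg a c))].

Definition is_module (g : lmodType k) (brg : g -> g -> g) (V : lmodType k)
  (act : g -> V -> V) : Prop :=
  bilin act /\
  (forall a b x, act (brg a b) x = act a (act b x) - act b (act a x)).

Definition lprod (g V : lmodType k) (act : g -> V -> V) (Theta : V -> g)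
  (x y : V) : V := act (Theta x) y.

Definition lsym (g V : lmodType k) (act : g -> V -> V) (Theta : V -> g)
  (x y : V) : V := 2%:R^-1 *: (lprod act Theta x y + lprod act Theta y x).

Definition is_LL_triple (g : lmodType k) (brg : g -> g -> g) (V : lmodType k)
  (act : g -> V -> V) (Theta : V -> g) : Prop :=
  [/\ is_lie brg, is_module brg act, linear Theta &
      (forall x y, Theta (lprod act Theta x y) = brg (Theta x) (Theta y))].

Definition castT (L : nat -> lmodType k) (m n : nat) (e : m = n) (x : L m) : L n :=
  eq_rect m (fun p => (L p : Type)) x n e.

(* graded Lie algebra L = (+)_{n} L_{-n}, L n = degree -n part, L 0 = 0;
   Koszul sign (-1)^{|x||y|} = (-1)^{mn} for x in L m, y in L n *)
Definition is_glie (L : nat -> lmodType k)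
  (br : forall m n, L m -> L n -> L (m + n)) : Prop :=
  [/\ (forall x : L 0, x = 0),
      (forall m n, bilin (br m n)),
      (forall m n (x : L m) (y : L n),
          br m n x y = - ((-1) ^+ (m * n) *: castT (addnC n m) (br n m y x))) &
      (forall m n p (x : L m) (y : L n) (z : L p),
          br m (n + p) x (br n p y z) =
          castT (esym (addnA m n p)) (br (m + n) p (br m n x y) z)
          + (-1) ^+ (m * n) *: castT (addnCA n m p) (br n (m + p) y (br m p x z)))].

Definition glie_morph (L : nat -> lmodType k) (br : forall m n, L m -> L n -> L (m + n))
  (L' : nat -> lmodType k) (br' : forall m n, L' m -> L' n -> L' (m + n))
  (f : forall n, L n -> L' n) : Prop :=
  (forall n, linear (f n)) /\
  (forall m n (x : L m) (y : L n), f (m + n) (br m n x y) = br' m n (f m x) (f n y)).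

Definition is_free_glie (V : lmodType k) (L : nat -> lmodType k)
  (br : forall m n, L m -> L n -> L (m + n)) (iota : V -> L 1) : Prop :=
  [/\ is_glie br, linear iota &
   forall (L' : nat -> lmodType k) (br' : forall m n, L' m -> L' n -> L' (m + n)),
     is_glie br' -> forall phi : V -> L' 1, linear phi ->
     exists f : forall n, L n -> L' n,
       [/\ glie_morph br br' f, (forall v, f 1 (iota v) = phi v) &
        forall f' : forall n, L n -> L' n, glie_morph br br' f' ->
          (forall v, f' 1 (iota v) = phi v) -> forall n x, f' n x = f n x]].

Definition is_gaction (g : lmodType k) (brg : g -> g -> g) (L : nat -> lmodType k)
  (br : forall m n, L m -> L n -> L (m + n)) (act : forall n, g -> L n -> L n) : Prop :=
  [/\ (forall n, is_module brg (act n)) &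
      (forall m n a (x : L m) (y : L n),
          act (m + n) a (br m n x y) = br m n (act m a x) y + br m n x (act n a y))].

Definition is_submod (g M : lmodType k) (act : g -> M -> M) (W : M -> Prop) : Prop :=
  [/\ W 0, (forall x y, W x -> W y -> W (x + y)),
      (forall c x, W x -> W (c *: x)) & (forall a x, W x -> W (act a x))].

(* K_{-2}: the largest g-submodule of F_{-2} (= S^2 V) contained in ker beta,
   i.e. the union (= sum) of all g-submodules contained in ker beta *)
Definition K2 (g : lmodType k) (V : lmodType k) (F : nat -> lmodType k)
  (actF : forall n, g -> F n -> F n) (beta : F 2 -> V) (z : F 2) : Prop :=
  exists W : F 2 -> Prop,
    [/\ is_submod (actF 2) W, (forall w, W w -> beta w = 0) & W z].

(* K_{-2} = K2, K_{-i} = sum_{j=1}^{i-2} [F_{-j}, K_{-i+j}] (i >= 3) *)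
Inductive Kid (F : nat -> lmodType k) (brF : forall m n, F m -> F n -> F (m + n))
  (K : F 2 -> Prop) : forall n, F n -> Prop :=
| Kid_base (z : F 2) : K z -> Kid brF K z
| Kid_br j m (x : F j) (y : F m) : (0 < j)%N -> Kid brF K y -> Kid brF K (brF j m x y)
| Kid_zero n : Kid brF K (0 : F n)
| Kid_add n (z w : F n) : Kid brF K z -> Kid brF K w -> Kid brF K (z + w).

Definition is_quotient_map (g : lmodType k) (F : nat -> lmodType k)
  (brF : forall m n, F m -> F n -> F (m + n)) (actF : forall n, g -> F n -> F n)
  (K : F 2 -> Prop)
  (T : nat -> lmodType k) (brT : forall m n, T m -> T n -> T (m + n))
  (actT : forall n, g -> T n -> T n) (pi : forall n, F n -> T n) : Prop :=
  [/\ glie_morph brF brT pi,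
      (forall n a (x : F n), pi n (actF n a x) = actT n a (pi n x)),
      (forall n (t : T n), exists x, pi n x = t) &
      (forall n (x : F n), pi n x = 0 <-> Kid brF K x)].

(* the differential d i = partial_{-i} : T_{-i-1} -> T_{-i}, with
   j := pi 1 \o iota : V ~ T_{-1} *)
Definition is_LL_differential (g : lmodType k) (V : lmodType k)
  (actV : g -> V -> V) (Theta : V -> g) (T : nat -> lmodType k)
  (brT : forall m n, T m -> T n -> T (m + n)) (actT : forall n, g -> T n -> T n)
  (j : V -> T 1) (d : forall i, T i.+1 -> T i) : Prop :=
  [/\ (forall i, linear (d i)),
      (forall i v (z : T i.+1), d i (actT i.+1 (Theta v) z) = actT i (Theta v) (d i z)),
      (forall u v, d 1 (brT 1 1 (j u) (j v)) = 2%:R *: j (lsym actV Theta u v)),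
      (forall n v (x : T n.+2),
          d n.+2 (brT 1 n.+2 (j v) x) =
          actT n.+2 (Theta v) x - brT 1 n.+1 (j v) (d n.+1 x)) &
      (forall m n (x : T m.+2) (y : T n.+2),
          d (m + n.+2).+1 (brT m.+2 n.+2 x y) =
          brT m.+1 n.+2 (d m.+1 x) y
          + (-1) ^+ m *: castT (congr1 S (esym (addnS m n.+1)))
                              (brT m.+2 n.+1 x (d n.+1 y)))].

Definition homact (G : Type) (A B : lmodType k) (actA : G -> A -> A)
  (actB : G -> B -> B) (a : G) (f : A -> B) : A -> B :=
  fun x => actB a (f x) - f (actA a x).

Inductive cyc_sub (G : Type) (A B : lmodType k) (act : G -> (A -> B) -> (A -> B))
  (f0 : A -> B) : (A -> B) -> Prop :=
| cyc_gen : cyc_sub act f0 f0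
| cyc_zero : cyc_sub act f0 (fun _ => 0)
| cyc_add f h : cyc_sub act f0 f -> cyc_sub act f0 h -> cyc_sub act f0 (fun x => f x + h x)
| cyc_scale (c : k) f : cyc_sub act f0 f -> cyc_sub act f0 (fun x => c *: f x)
| cyc_act a f : cyc_sub act f0 f -> cyc_sub act f0 (act a f).

End LLDefs.

(* The relations defining the differential make sense with [Theta] replaced by
   any [X : V -> g]: call a family [D = (D_i)] a differential for [X] if
   [D_1 [u, v] = X u . v + X v . u] and [D_(i+1) [u, x] = X u . x - [u, D_i x]]
   for [u, v] in [T_(-1) = V].  Since [T] is a quotient of the free graded Lie
   algebra on [V[1]], it is spanned by right-normed brackets [[u1, [u2, ..]]],
   so a differential for [X] is unique when it exists.  Differentials are
   additive and homogeneous in [X], and, because [g] acts on [T] by derivations,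
   if [D] is a differential for [X] then [a . D] is one for [a . X].  As the
   differential of [T] is a differential for [Theta] (here [2 != 0] is used),
   every [X] in [R_Theta] has a unique differential [D], and [mu_(-i) X := D_i]
   is the required surjective morphism of [g]-modules. *)

From HB Require Import structures.
From mathcomp Require Import all_boot all_order all_algebra ssrAC.
From mathcomp Require Import boolp.
Import GRing.Theory.
Local Open Scope ring_scope.
Set Implicit Arguments. Unset Strict Implicit. Unset Printing Implicit Defensive.

Section LinearMaps.
Variables (k : fieldType) (U W : lmodType k) (f : U -> W).
Hypothesis f_lin : linear f.

Lemma linD x y : f (x + y) = f x + f y.
Proof. by have := f_lin 1 x y; rewrite !scale1r. Qed.

Lemma linZ c x : f (c *: x) = c *: f x.
Proof. exact: scalable_linear. Qed.

Lemma lin0 : f 0 = 0.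
Proof. by rewrite -(scale0r 0) linZ scale0r. Qed.

Lemma linN x : f (- x) = - f x.
Proof. by rewrite -scaleN1r linZ scaleN1r. Qed.

Lemma linB x y : f (x - y) = f x - f y.
Proof. by rewrite linD linN. Qed.

End LinearMaps.

Section SubLmodule.
Variables (k : fieldType) (M : lmodType k) (P : M -> Prop).
Hypotheses (P0 : P 0) (PD : forall x y, P x -> P y -> P (x + y))
  (PZ : forall (c : k) x, P x -> P (c *: x)).

Definition subpred : {pred M} := fun x => `[< P x >].

Lemma subpred_closed : subsemimod_closed subpred.
Proof.
split; [split|].
- exact/asboolP.
- by move=> x y /asboolP Px /asboolP Py; apply/asboolP; apply: PD.
- by move=> c x /asboolP Px; apply/asboolP; apply: PZ.
Qed.

HB.instance Definition _ := GRing.isSubmodClosed.Build k M subpred subpred_closed.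
Definition subpred_sig := {x : M | x \in subpred}.
HB.instance Definition _ :=
  [isSub for (@sval M (fun x => x \in subpred)) : subpred_sig -> M].
HB.instance Definition _ := [Choice of subpred_sig by <:].
HB.instance Definition _ := [SubChoice_isSubLmodule of subpred_sig by <:].
Definition sublmod : lmodType k := subpred_sig.

Lemma sublmodP (x : sublmod) : P (val x).
Proof. by case: x => x /= /asboolP. Qed.

Definition in_sublmod (x : M) (Px : P x) : sublmod := exist _ x (asboolT Px).

End SubLmodule.

Section RightNormed.
Variables (k : fieldType) (V : lmodType k) (L : nat -> lmodType k)
  (br : forall m n, L m -> L n -> L (m + n)) (e : V -> L 1).

Inductive right_normed : forall n, L n -> Prop :=
| right_normed_gen v : right_normed (e v)
| right_normed_br n v (y : L n) : right_normed y -> right_normed (br (e v) y)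
| right_normed0 n : right_normed (0 : L n)
| right_normedD n (x y : L n) : right_normed x -> right_normed y -> right_normed (x + y)
| right_normedZ n c (x : L n) : right_normed x -> right_normed (c *: x).

Lemma right_normed_castT m n (eq_mn : m = n) (x : L m) :
  right_normed (castT eq_mn x) <-> right_normed x.
Proof. by case: n / eq_mn. Qed.

Hypothesis L_glie : is_glie br.

(* Jacobi: [[e v, x], y] = [e v, [x, y]] - (-1)^m [x, [e v, y]]. *)
Lemma right_normed_bracket m n (x : L m) (y : L n) :
  right_normed x -> right_normed y -> right_normed (br x y).
Proof.
have [_ br_bilin _ jacobi] := L_glie.
move=> rx; elim: rx n y => {m x} [v|m v x _ IHx|m|m x1 x2 _ IH1 _ IH2|m c x _ IHx] n y ry.
- exact: right_normed_br.
- apply/(right_normed_castT (esym (addnA 1%N m n))).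
  have -> : castT (esym (addnA 1%N m n)) (br (br (e v) x) y) =
      br (e v) (br x y) - (-1) ^+ (1 * m)%N *:
        castT (addnCA m 1%N n) (br x (br (e v) y)).
    by rewrite jacobi addrK.
  apply: right_normedD; first exact/right_normed_br/IHx.
  rewrite -scaleN1r; do 2!apply: right_normedZ.
  exact/right_normed_castT/IHx/right_normed_br.
- by rewrite (lin0 ((br_bilin m n).2 y)); apply: right_normed0.
- rewrite (linD ((br_bilin m n).2 y)).
  by apply: right_normedD; [apply: IH1 | apply: IH2].
- by rewrite (linZ ((br_bilin m n).2 y)); apply/right_normedZ/IHx.
Qed.

Definition right_normed_sub n : lmodType k :=
  sublmod (@right_normed0 n) (@right_normedD n) (@right_normedZ n).

Definition br_sub m n (x : right_normed_sub m) (y : right_normed_sub n) :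
    right_normed_sub (m + n) :=
  in_sublmod _ _ _ (right_normed_bracket (sublmodP x) (sublmodP y)).

Lemma val_castT m n (eq_mn : m = n) (x : right_normed_sub m) :
  val (castT eq_mn x) = castT eq_mn (val x).
Proof. by case: n / eq_mn. Qed.

Lemma glie_right_normed_sub : is_glie br_sub.
Proof.
have [L0 br_bilin br_anti jacobi] := L_glie.
split.
- by move=> x; apply: val_inj; apply: L0.
- by move=> m n; split=> [x|y] c u v; apply: val_inj;
    [apply: (br_bilin m n).1 | apply: ((br_bilin m n).2 (val y))].
- by move=> m n x y; apply: val_inj; rewrite /= val_castT br_anti.
- by move=> m n p x y z; apply: val_inj; rewrite /= !val_castT jacobi.
Qed.

End RightNormed.

Section FreeGlie.
Variables (k : fieldType) (V : lmodType k) (L : nat -> lmodType k)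
  (br : forall m n, L m -> L n -> L (m + n)) (e : V -> L 1).

Lemma free_right_normed : is_free_glie br e -> forall n (x : L n), right_normed br e x.
Proof.
move=> [L_glie e_lin univ] n x.
pose e_sub v : right_normed_sub br e 1 := in_sublmod _ _ _ (right_normed_gen br e v).
have e_sub_lin : linear e_sub by move=> c u v; apply: val_inj; apply: e_lin.
have [f [[f_lin f_br] f_e _]] :=
  univ _ _ (glie_right_normed_sub e L_glie) e_sub e_sub_lin.
have [f0 [_ _ uniq]] := univ _ _ L_glie e e_lin.
have val_f : glie_morph br br (fun n x => val (f n x)).
  by split=> [m c u v | m m' u v] /=; rewrite ?f_lin ?f_br.
have id_morph : glie_morph br br (fun n x => x) by [].
have val_f_e v : val (f 1%N (e v)) = e v by rewrite f_e.
have val_fK : val (f n x) = f0 n x := uniq _ val_f val_f_e n x.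
have idK : x = f0 n x := uniq _ id_morph (fun=> erefl) n x.
by rewrite idK -val_fK; apply: sublmodP.
Qed.

Variables (L' : nat -> lmodType k) (br' : forall m n, L' m -> L' n -> L' (m + n))
  (f : forall n, L n -> L' n).
Hypothesis f_morph : glie_morph br br' f.

Lemma right_normed_morph n (x : L n) :
  right_normed br e x -> right_normed br' (fun v => f (e v)) (f x).
Proof.
have [f_lin f_br] := f_morph.
elim=> {n x} [v|n v y _ IH|n|n x y _ IHx _ IHy|n c x _ IH].
- exact: right_normed_gen.
- by rewrite (f_br 1%N n); apply: right_normed_br.
- by rewrite lin0 //; apply: right_normed0.
- by rewrite linD //; apply: right_normedD.
- by rewrite linZ //; apply: right_normedZ.
Qed.

Lemma surjective_right_normed :
  is_free_glie br e -> (forall n (y : L' n), exists x, f x = y) ->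
  forall n (y : L' n), right_normed br' (fun v => f (e v)) y.
Proof.
move=> L_free f_surj n y; have [x <-] := f_surj n y.
exact/right_normed_morph/free_right_normed.
Qed.

End FreeGlie.

Section Lifting.
Variables (k : fieldType) (g : lmodType k) (brg : g -> g -> g)
  (V : lmodType k) (actV : g -> V -> V)
  (T : nat -> lmodType k) (brT : forall m n, T m -> T n -> T (m + n))
  (actT : forall n, g -> T n -> T n) (j : V -> T 1).
Hypotheses (T_glie : is_glie brT) (actT_der : is_gaction brg brT actT)
  (j_lin : linear j) (j_act : forall a v, j (actV a v) = actT a (j v))
  (T_gen : forall n (t : T n), right_normed brT j t).

Lemma T0 (x : T 0) : x = 0.
Proof. by case: T_glie => T0 _ _ _; apply: T0. Qed.

Lemma brT_linr m n (x : T m) : linear (@brT m n x).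
Proof. by case: T_glie => _ /(_ m n) []. Qed.

Lemma actT_linl n (x : T n) : linear (fun a => actT a x).
Proof. by case: actT_der => /(_ n) [[]]. Qed.

Lemma actT_linr n a : linear (@actT n a).
Proof. by case: actT_der => /(_ n) [[]]. Qed.

Lemma actT_brg n a b (x : T n) :
  actT (brg a b) x = actT a (actT b x) - actT b (actT a x).
Proof. by case: actT_der => /(_ n) []. Qed.

Lemma actT_brT m n a (x : T m) (y : T n) :
  actT a (brT x y) = brT (actT a x) y + brT x (actT a y).
Proof. by case: actT_der. Qed.

Lemma T1_range (t : T 1) : exists u, t = j u.
Proof.
pose Q n : T n -> Prop :=
  if n is 1 then fun t => exists u, t = j u else fun _ => True.
suff /(_ _ t) : forall n (t : T n), Q n t by [].
move=> n {}t; elim: (T_gen t) => {n t} [v|n v y _ _|n|n x y _ IHx _ IHy|n c x _ IHx].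
- by exists v.
- case: n y => [|n] y //=.
  by exists 0; rewrite (T0 y) (lin0 (brT_linr _)) (lin0 j_lin).
- by case: n => [|[|n]] //=; exists 0; rewrite (lin0 j_lin).
- case: n x y IHx IHy => [|[|n]] //= x y [u ->] [w ->].
  by exists (u + w); rewrite (linD j_lin).
- case: n x IHx => [|[|n]] //= x [u ->].
  by exists (c *: u); rewrite (linZ j_lin).
Qed.

Definition differential_for (X : V -> g) (D : forall i, T i.+1 -> T i) : Prop :=
  [/\ forall i, linear (D i),
      forall u v, D 1%N (brT (j u) (j v)) = actT (X u) (j v) + actT (X v) (j u) &
      forall n v (x : T n.+2),
        D n.+2 (brT (j v) x) = actT (X v) x - brT (j v) (D n.+1 x)].

Lemma differential_for_unique X D E :
  differential_for X D -> differential_for X E -> forall i x, D i x = E i x.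
Proof.
move=> [D_lin D1 D2] [E_lin E1 E2] [|i] x; first by rewrite [D 0%N x]T0 [E 0%N x]T0.
pose Q n : T n -> Prop :=
  if n is m.+2 then fun t => D m.+1 t = E m.+1 t else fun _ => True.
suff /(_ _ x) : forall n (t : T n), Q n t by [].
move=> n t; elim: (T_gen t) => {n t} [v|n v y _ IHy|n|n x1 x2 _ IH1 _ IH2|n c x' _ IH].
- by [].
- case: n y IHy => [|[|n]] //= y IHy.
    by have [u ->] := T1_range y; rewrite D1 E1.
  by rewrite D2 E2 IHy.
- by case: n => [|[|n]] //=; rewrite !lin0.
- by case: n x1 x2 IH1 IH2 => [|[|n]] //= x1 x2 IH1 IH2; rewrite !linD // IH1 IH2.
- by case: n x' IH => [|[|n]] //= x' IH; rewrite !linZ // IH.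
Qed.

Lemma differential_for0 : differential_for (fun=> 0) (fun _ _ => 0).
Proof.
split=> [i c u v|u v|n v x]; first by rewrite scaler0 addr0.
  by rewrite !(lin0 (actT_linl _)) addr0.
by rewrite (lin0 (actT_linl _)) (lin0 (brT_linr _)) subr0.
Qed.

Lemma differential_forD X Y D E : differential_for X D -> differential_for Y E ->
  differential_for (fun v => X v + Y v) (fun i z => D i z + E i z).
Proof.
move=> [D_lin D1 D2] [E_lin E1 E2]; split=> [i c u w|u v|n v x].
- by rewrite D_lin E_lin scalerDr addrACA.
- by rewrite D1 E1 !(linD (actT_linl _)) addrACA.
- by rewrite D2 E2 (linD (actT_linl _)) (linD (brT_linr _)) opprD addrACA.
Qed.

Lemma differential_forZ c X D : differential_for X D ->
  differential_for (fun v => c *: X v) (fun i z => c *: D i z).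
Proof.
move=> [D_lin D1 D2]; split=> [i a u w|u v|n v x].
- by rewrite D_lin scalerDr !scalerA mulrC.
- by rewrite D1 !(linZ (actT_linl _)) scalerDr.
- by rewrite D2 (linZ (actT_linl _)) (linZ (brT_linr _)) scalerBr.
Qed.

Lemma differential_for_homact a X D : differential_for X D ->
  differential_for (homact actV brg a X)
                   (fun i => homact (@actT i.+1) (@actT i) a (D i)).
Proof.
move=> [D_lin D1 D2]; split=> [i c u w|u v|n v x]; rewrite /homact.
- rewrite D_lin !(actT_linr a) D_lin.
  by rewrite opprD scalerBr addrACA.
- rewrite (@actT_brT 1%N 1%N) -[actT a (j u)]j_act -[actT a (j v)]j_act.
  rewrite (linD (D_lin 1%N)) !D1 !j_act (linD (actT_linr a)) !(linB (actT_linl _)).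
  rewrite !actT_brg !opprD !addrA.
  by rewrite [LHS](ACl (1*5*3*2*4*6)).
- rewrite (@actT_brT 1%N n.+2) -[actT a (j v)]j_act (linD (D_lin _)) !D2 j_act.
  rewrite (linB (actT_linr a)) (@actT_brT 1%N n.+1) (linB (actT_linl _)) actT_brg.
  rewrite (linB (brT_linr _)) !opprD !opprK !addrA.
  by rewrite [LHS](ACl (1*2*5*6*4*3*7)) /= subrK.
Qed.

Lemma LL_differential_for Theta d : (2%:R : k) != 0 ->
  is_LL_differential actV Theta brT actT j d -> differential_for Theta d.
Proof.
move=> two_neq0 [d_lin _ d1 d2 _]; split=> // u v.
rewrite d1 /lsym /lprod (linZ j_lin) (linD j_lin) !j_act.
by rewrite scalerA mulfV // scale1r.
Qed.

Variables (Theta : V -> g) (d : forall i, T i.+1 -> T i).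
Hypothesis d_Theta : differential_for Theta d.

Local Notation R_Theta := (cyc_sub (homact actV brg) Theta).
Local Notation R_d i := (cyc_sub (homact (@actT i.+1) (@actT i)) (@d i)).

(* The unique differential for [X] if there is one, and junk [0] otherwise. *)
Definition lift (X : V -> g) : forall i, T i.+1 -> T i :=
  if pselect (exists D, differential_for X D) is left D_X then sval (cid D_X)
  else fun _ _ => 0.
Arguments lift X i : clear implicits.

Lemma liftP X D : differential_for X D -> differential_for X (lift X).
Proof.
move=> D_X; rewrite /lift; case: pselect => [D_X'|[]]; last by exists D.
exact: svalP (cid D_X').
Qed.

Lemma lift_eq X D : differential_for X D -> forall i, lift X i = D i.
Proof.
move=> D_X i; apply: funext => x.
exact (differential_for_unique (liftP D_X) D_X x).
Qed.

Lemma lift_differential_for X : R_Theta X -> differential_for X (lift X).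
Proof.
elim=> [||Y Z _ IHY _ IHZ|c Y _ IH|a Y _ IH].
- exact: liftP d_Theta.
- exact: liftP differential_for0.
- exact: liftP (differential_forD IHY IHZ).
- exact: liftP (differential_forZ c IH).
- exact: liftP (differential_for_homact a IH).
Qed.

Lemma lift_Theta i : lift Theta i = @d i.
Proof. exact (lift_eq d_Theta i). Qed.

Lemma lift0 i : lift (fun=> 0) i = fun=> 0.
Proof. exact (lift_eq differential_for0 i). Qed.

Lemma liftD X Y i : R_Theta X -> R_Theta Y ->
  lift (fun v => X v + Y v) i = (fun z => lift X i z + lift Y i z).
Proof.
move=> /lift_differential_for D_X /lift_differential_for D_Y.
exact (lift_eq (differential_forD D_X D_Y) i).
Qed.

Lemma liftZ c X i :
  R_Theta X -> lift (fun v => c *: X v) i = (fun z => c *: lift X i z).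
Proof.
by move=> /lift_differential_for D_X; exact (lift_eq (differential_forZ c D_X) i).
Qed.

Lemma lift_homact a X i : R_Theta X ->
  lift (homact actV brg a X) i = homact (@actT i.+1) (@actT i) a (lift X i).
Proof.
by move=> /lift_differential_for D_X; exact (lift_eq (differential_for_homact a D_X) i).
Qed.

Lemma lift_cyc X i : R_Theta X -> R_d i (lift X i).
Proof.
elim=> [|| Y Z RY IHY RZ IHZ | c Y RY IH | a Y RY IH].
- by rewrite lift_Theta; apply: cyc_gen.
- by rewrite lift0; apply: cyc_zero.
- by rewrite liftD //; apply: cyc_add.
- by rewrite liftZ //; apply: cyc_scale.
- by rewrite lift_homact //; apply: cyc_act.
Qed.

Lemma lift_onto i phi : R_d i phi -> exists2 X, R_Theta X & lift X i = phi.
Proof.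
elim=> [|| f h _ [X RX <-] _ [Y RY <-] | c f _ [X RX <-] | a f _ [X RX <-]].
- by exists Theta; [apply: cyc_gen | apply: lift_Theta].
- by exists (fun=> 0); [apply: cyc_zero | apply: lift0].
- by exists (fun v => X v + Y v); [apply: cyc_add | apply: liftD].
- by exists (fun v => c *: X v); [apply: cyc_scale | apply: liftZ].
- by exists (homact actV brg a X); [apply: cyc_act | apply: lift_homact].
Qed.

Lemma lift_cyclic_morphism i :
  exists mu : (V -> g) -> (T i.+1 -> T i),
    let RTheta := cyc_sub (homact actV brg) Theta in
    let Ri := cyc_sub (homact (@actT i.+1) (@actT i)) (@d i) in
    [/\ (forall X, RTheta X -> Ri (mu X)),
        ((forall X Y, RTheta X -> RTheta Y ->
           mu (fun x => X x + Y x) = (fun z => mu X z + mu Y z)) /\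
         (forall (c : k) X, RTheta X ->
           mu (fun x => c *: X x) = (fun z => c *: mu X z))),
        (forall a X, RTheta X ->
           mu (homact actV brg a X) = homact (@actT i.+1) (@actT i) a (mu X)),
        (forall phi, Ri phi -> exists2 X, RTheta X & mu X = phi)
      & mu Theta = @d i].
Proof.
exists (lift^~ i); split.
- by move=> X; apply: lift_cyc.
- by split=> *; [apply: liftD | apply: liftZ].
- by move=> a X; apply: lift_homact.
- exact: lift_onto.
- exact: lift_Theta.
Qed.

End Lifting.

Theorem mainTheorem10
  (k : fieldType) (char0 : [pchar k] =i pred0)
  (g : lmodType k) (brg : g -> g -> g)
  (V : lmodType k) (actV : g -> V -> V) (Theta : V -> g)
  (HLL : is_LL_triple brg actV Theta)
  (* free graded Lie algebra F on V[1], with g acting by derivations *)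
  (F : nat -> lmodType k) (brF : forall m n, F m -> F n -> F (m + n))
  (iota : V -> F 1) (HF : is_free_glie brF iota)
  (actF : forall n, g -> F n -> F n) (HactF : is_gaction brg brF actF)
  (HactFV : forall a v, actF 1 a (iota v) = iota (actV a v))
  (* beta : F_{-2} = S^2 V -> V, [u,v] |-> {u,v} *)
  (beta : F 2 -> V) (Hbeta_lin : linear beta)
  (Hbeta : forall u v, beta (brF 1 1 (iota u) (iota v)) = lsym actV Theta u v)
  (* T_{<= -1} = F / K_bullet *)
  (T : nat -> lmodType k) (brT : forall m n, T m -> T n -> T (m + n))
  (HT : is_glie brT)
  (actT : forall n, g -> T n -> T n) (HactT : is_gaction brg brT actT)
  (pi : forall n, F n -> T n)
  (Hpi : is_quotient_map brF actF (K2 actF beta) brT actT pi)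
  (* the differential *)
  (d : forall i, T i.+1 -> T i)
  (Hd : is_LL_differential actV Theta brT actT (fun v => pi 1 (iota v)) d) :
  forall i, (0 < i)%N ->
  exists mu : (V -> g) -> (T i.+1 -> T i),
    let RTheta := cyc_sub (homact actV brg) Theta in
    let Ri := cyc_sub (homact (actT i.+1) (actT i)) (d i) in
    [/\ (forall X, RTheta X -> Ri (mu X)),
        (* mu is linear on R_Theta *)
        ((forall X Y, RTheta X -> RTheta Y ->
           mu (fun x => X x + Y x) = (fun z => mu X z + mu Y z)) /\
         (forall (c : k) X, RTheta X -> mu (fun x => c *: X x) = (fun z => c *: mu X z))),
        (forall a X, RTheta X -> mu (homact actV brg a X) = homact (actT i.+1) (actT i) a (mu X)),
        (forall phi, Ri phi -> exists2 X, RTheta X & mu X = phi)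
      & mu Theta = d i].
Proof.
move=> i _.
have [[pi_lin pi_br] pi_act pi_surj _] := Hpi.
have [_ iota_lin _] := HF.
have j_lin : linear (fun v => pi 1%N (iota v)).
  by move=> c u v; rewrite iota_lin pi_lin.
have j_act a v : pi 1%N (iota (actV a v)) = actT 1%N a (pi 1%N (iota v)).
  by rewrite -HactFV pi_act.
have T_gen := surjective_right_normed (conj pi_lin pi_br) HF pi_surj.
have two_neq0 : (2%:R : k) != 0 by rewrite (pcharf0P k).1.
exact (lift_cyclic_morphism HT HactT j_lin j_act T_gen
  (LL_differential_for j_lin j_act two_neq0 Hd) i).
Qed.
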